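(* Let $H$ be a Hermitian operator on $\mathcal{H}=(\mathbb{C}^2)^{\otimes n}$ with eigenvalues $E_1\le E_2\le\cdots\le E_{2^n}$ (with multiplicity) and an orthonormal eigenbasis $|\varphi_1\rangle,\dots,|\varphi_{2^n}\rangle$, $H|\varphi_l\rangle=E_l|\varphi_l\rangle$. Let $E_g=E_1$, $|\Psi_g\rangle=|\varphi_1\rangle$, $\Delta=E_2-E_1$. Let $|\Psi_0\rangle$ be a normalised state with $p_g=|\langle\Psi_g|\Psi_0\rangle|^2>0$. For $\tau>0$ let $|\chi_\tau\rangle=e^{-\frac12(H-E_g)^2\tau^2}|\Psi_0\rangle$ and $E(\tau)=\langle\chi_\tau|H|\chi_\tau\rangle/\langle\chi_\tau|\chi_\tau\rangle$. Then $$E(\tau)-E_g\le\frac{1-p_g}{p_g}\,e^{-\tilde\Delta^2\tau^2}\,\tilde\Delta,\qquad \tilde\Delta=\max\{\Delta,(\sqrt2\,\tau)^{-1}\}.$$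
   Context: In the paper, $|\chi_\tau\rangle$ is (up to a positive scalar factor) the random-circuit variational state obtained from the Hamiltonian ansatz with a specific network configuration, and $E(\tau)$ is its energy. *)

From HB Require Import structures.
From mathcomp Require Import all_boot all_order all_algebra.
From mathcomp Require Import reals.
From mathcomp Require Import sequences exp.
From mathcomp Require Import complex.
Set Implicit Arguments. Unset Strict Implicit. Unset Printing Implicit Defensive.
Import Order.TTheory GRing.Theory Num.Theory.
Local Open Scope ring_scope.
Local Open Scope complex_scope.

Definition cdot (R : realType) (N : nat) (u v : 'cV[R[i]]_N) : R[i] :=
  \sum_(k < N) (u k 0)^* * v k 0.

Definition bra (R : realType) (N : nat) (v : 'cV[R[i]]_N) : 'rV[R[i]]_N :=
  \row_(k < N) (v k 0)^*.

Definition hermitian_mx (R : realType) (N : nat) (H : 'M[R[i]]_N) : Prop :=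
  forall j k : 'I_N, H j k = (H k j)^*.

(* Orthonormal family of N vectors (hence an orthonormal basis of C^N). *)
Definition orthonormal_basis (R : realType) (N : nat) (phi : 'I_N -> 'cV[R[i]]_N) : Prop :=
  forall l m : 'I_N, cdot (phi l) (phi m) = (if l == m then 1 else 0).

Definition spectral_fun (R : realType) (N : nat) (E : 'I_N -> R)
  (phi : 'I_N -> 'cV[R[i]]_N) (f : R -> R) : 'M[R[i]]_N :=
  \sum_(l < N) (f (E l))%:C *: (phi l *m bra (phi l)).

Definition gauss_filter (R : realType) (N : nat) (E : 'I_N -> R)
  (phi : 'I_N -> 'cV[R[i]]_N) (Eg tau : R) : 'M[R[i]]_N :=
  spectral_fun E phi (fun x => expR (- (1/2) * (x - Eg) ^+ 2 * tau ^+ 2)).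

Definition cabs2 (R : realType) (z : R[i]) : R := complex.Re z ^+ 2 + complex.Im z ^+ 2.

From HB Require Import structures.
From mathcomp Require Import all_boot all_order all_algebra.
From mathcomp Require Import reals.
From mathcomp Require Import sequences exp.
From mathcomp Require Import complex.
From mathcomp Require Import ring lra.
Import Order.TTheory GRing.Theory Num.Theory.
Local Open Scope ring_scope.
Local Open Scope complex_scope.

(* Expanding Psi0 in the eigenbasis with weights w_l = |<phi_l|Psi0>|^2, the
   filter multiplies the l-th amplitude by exp(-x_l^2 tau^2 / 2), x_l = E_l - E_g,
   so E(tau) - E_g = sum_l w_l x_l e^(-x_l^2 tau^2) / sum_l w_l e^(-x_l^2 tau^2).
   The denominator is at least its ground-state term p_g, while every other
   term of the numerator has x_l >= Delta.  The function x e^(-x^2 tau^2)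
   peaks at x = 1/(sqrt 2 tau) and decreases beyond it, so on [Delta, oo) it is
   bounded by its value at max(Delta, 1/(sqrt 2 tau)); the weights of the
   excited states add up to 1 - p_g. *)

Section InnerProduct.
Variables (R : realType) (N : nat).
Implicit Types (u v : 'cV[R[i]]_N) (phi : 'I_N -> 'cV[R[i]]_N).

Lemma mul_conjc_cabs2 (z : R[i]) : z^* * z = (cabs2 z)%:C.
Proof.
case: z => a b; rewrite /cabs2 /=; simpc.
by apply/eqP; rewrite eq_complex /=; apply/andP; split; apply/eqP; ring.
Qed.

Lemma cabs2_ge0 (z : R[i]) : 0 <= cabs2 z.
Proof. by rewrite /cabs2 addr_ge0 ?sqr_ge0. Qed.

Lemma cabs2_realM (r : R) (z : R[i]) : (r%:C * z)^* * (r%:C * z) = (r ^+ 2 * cabs2 z)%:C.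
Proof.
case: z => a b; rewrite /cabs2 /=; simpc.
by apply/eqP; rewrite eq_complex /=; apply/andP; split; apply/eqP; ring.
Qed.

Definition adjmx {m p} (A : 'M[R[i]]_(m, p)) : 'M[R[i]]_(p, m) := (A ^t conjc)%sesqui.

Lemma adjmxM m p q (A : 'M[R[i]]_(m, p)) (B : 'M[R[i]]_(p, q)) :
  adjmx (A *m B) = adjmx B *m adjmx A.
Proof. by rewrite /adjmx -!map_trmx map_mxM trmx_mul. Qed.

Lemma adjmxK m p (A : 'M[R[i]]_(m, p)) : adjmx (adjmx A) = A.
Proof. by apply/matrixP => j k; rewrite !mxE conjcK. Qed.

Lemma cdotE u v : cdot u v = (adjmx u *m v) 0 0.
Proof. by rewrite mxE; apply: eq_bigr => k _; rewrite !mxE. Qed.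

Lemma bra_mulmx u v : bra u *m v = (cdot u v)%:M.
Proof.
apply/matrixP => j k; rewrite !ord1 !mxE eqxx mulr1n.
by apply: eq_bigr => l _; rewrite mxE.
Qed.

Lemma cdot_sumr u (a : 'I_N -> R[i]) phi :
  cdot u (\sum_l a l *: phi l) = \sum_l a l * cdot u (phi l).
Proof.
rewrite /cdot; under eq_bigr => k _ do rewrite summxE big_distrr /=.
rewrite exchange_big /=; apply: eq_bigr => l _; rewrite big_distrr /=.
by apply: eq_bigr => k _; rewrite mxE mulrCA.
Qed.

Lemma cdot_suml v (a : 'I_N -> R[i]) phi :
  cdot (\sum_l a l *: phi l) v = \sum_l (a l)^* * cdot (phi l) v.
Proof.
rewrite /cdot; under eq_bigr => k _ do rewrite summxE rmorph_sum big_distrl /=.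
rewrite exchange_big /=; apply: eq_bigr => l _; rewrite big_distrr /=.
by apply: eq_bigr => k _; rewrite mxE rmorphM mulrA.
Qed.

Lemma cdot_onb_sum phi (a b : 'I_N -> R[i]) : orthonormal_basis phi ->
  cdot (\sum_l a l *: phi l) (\sum_l b l *: phi l) = \sum_l (a l)^* * b l.
Proof.
move=> onb; rewrite cdot_suml; apply: eq_bigr => l _; rewrite cdot_sumr.
rewrite (bigD1 l) //= onb eqxx mulr1 big1 ?addr0 // => m /negbTE ml.
by rewrite onb eq_sym ml mulr0.
Qed.

(* N orthonormal vectors in C^N form a unitary matrix P, and P^* P = 1 forces
   P P^* = 1: this is where completeness of the basis comes from. *)
Lemma cdot_parseval phi v : orthonormal_basis phi ->
  cdot v v = (\sum_l cabs2 (cdot (phi l) v))%:C.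
Proof.
move=> onb; pose P : 'M[R[i]]_N := \matrix_(k, l) phi l k 0.
have PhP : adjmx P *m P = 1%:M.
  apply/matrixP => l m; have -> : (1%:M : 'M[R[i]]_N) l m = cdot (phi l) (phi m).
    by rewrite onb mxE; case: eqP.
  by rewrite mxE; apply: eq_bigr => k _; rewrite !mxE.
have coordE l : cdot (phi l) v = (adjmx P *m v) l 0.
  by rewrite mxE; apply: eq_bigr => k _; rewrite !mxE.
transitivity (\sum_l (cdot (phi l) v)^* * cdot (phi l) v); last first.
  by rewrite rmorph_sum; apply: eq_bigr => l _; rewrite mul_conjc_cabs2.
under eq_bigr => l _ do rewrite coordE.
rewrite -[RHS]/(cdot (adjmx P *m v) (adjmx P *m v)).
by rewrite !cdotE adjmxM adjmxK -mulmxA (mulmxA P) (mulmx1C PhP) mul1mx.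
Qed.

End InnerProduct.

Section SpectralFunction.
Variables (R : realType) (N : nat) (E : 'I_N -> R) (phi : 'I_N -> 'cV[R[i]]_N).
Hypothesis onb : orthonormal_basis phi.

Lemma spectral_fun_mulmx (f : R -> R) (v : 'cV[R[i]]_N) :
  spectral_fun E phi f *m v = \sum_l ((f (E l))%:C * cdot (phi l) v) *: phi l.
Proof.
rewrite mulmx_suml; apply: eq_bigr => l _.
by rewrite -scalemxAl -mulmxA bra_mulmx mul_mx_scalar scalerA.
Qed.

Lemma spectral_fun_norm2 (f : R -> R) (v : 'cV[R[i]]_N)
    (chi := spectral_fun E phi f *m v) :
  cdot chi chi = (\sum_l cabs2 (cdot (phi l) v) * f (E l) ^+ 2)%:C.
Proof.
rewrite /chi spectral_fun_mulmx cdot_onb_sum // rmorph_sum.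
by apply: eq_bigr => l _; rewrite cabs2_realM mulrC.
Qed.

Lemma spectral_fun_energy (H : 'M[R[i]]_N) (f : R -> R) (v : 'cV[R[i]]_N)
    (chi := spectral_fun E phi f *m v) :
  (forall l, H *m phi l = (E l)%:C *: phi l) ->
  cdot chi (H *m chi) = (\sum_l cabs2 (cdot (phi l) v) * f (E l) ^+ 2 * E l)%:C.
Proof.
move=> eigen; rewrite /chi spectral_fun_mulmx mulmx_sumr.
under [X in cdot _ X]eq_bigr => l _ do rewrite -scalemxAr eigen scalerA.
rewrite cdot_onb_sum // rmorph_sum; apply: eq_bigr => l _.
by rewrite mulrA cabs2_realM !rmorphM /=; ring.
Qed.

End SpectralFunction.

Section GaussianWeight.
Variable R : realType.

(* x e^(-x^2 t^2) = D e^(-D^2 t^2) (x / D) e^(-(x^2 - D^2) t^2), and 1 + s <= e^s. *)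
Lemma gauss_weight_le (tau x D : R) :
  0 < D -> x <= D * (1 + (x ^+ 2 - D ^+ 2) * tau ^+ 2) ->
  x * expR (- (x ^+ 2 * tau ^+ 2)) <= D * expR (- (D ^+ 2 * tau ^+ 2)).
Proof.
move=> D0 key.
have -> : expR (- (x ^+ 2 * tau ^+ 2))
        = (expR ((x ^+ 2 - D ^+ 2) * tau ^+ 2))^-1 * expR (- (D ^+ 2 * tau ^+ 2)).
  by rewrite -expRN -expRD; congr expR; ring.
rewrite mulrA ler_wpM2r ?expR_ge0 // ler_pdivrMr ?expR_gt0 //.
by apply: (le_trans key); rewrite ler_pM2l // mulrC; exact: expR_ge1Dx.
Qed.

Lemma gauss_weight_le_peak (tau x s : R) :
  0 < s -> 2 * s ^+ 2 * tau ^+ 2 = 1 ->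
  x * expR (- (x ^+ 2 * tau ^+ 2)) <= s * expR (- (s ^+ 2 * tau ^+ 2)).
Proof.
move=> s0 peak; apply: gauss_weight_le => //.
have : 0 <= (x - s) ^+ 2 by exact: sqr_ge0.
by rewrite !expr2 in peak *; nra.
Qed.

Lemma gauss_weight_antitone (tau x D : R) :
  0 < D -> 1 <= 2 * D ^+ 2 * tau ^+ 2 -> D <= x ->
  x * expR (- (x ^+ 2 * tau ^+ 2)) <= D * expR (- (D ^+ 2 * tau ^+ 2)).
Proof.
move=> D0 past Dx; apply: gauss_weight_le => //.
have : 0 <= (x - D) * (D * (x + D) * tau ^+ 2 - 1).
  by apply: mulr_ge0; rewrite !expr2 in past *; nra.
by rewrite !expr2 in past *; nra.
Qed.

Lemma gauss_weight_le_max (tau Delta x : R)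
    (Dt := Num.max Delta (Num.sqrt 2 * tau)^-1) :
  0 < tau -> Delta <= x ->
  x * expR (- (x ^+ 2 * tau ^+ 2)) <= Dt * expR (- (Dt ^+ 2 * tau ^+ 2)).
Proof.
move=> tau0 Dx; set s := (Num.sqrt 2 * tau)^-1.
have s0 : 0 < s by rewrite invr_gt0 mulr_gt0 ?sqrtr_gt0.
have peak : 2 * s ^+ 2 * tau ^+ 2 = 1.
  by rewrite exprVn exprMn sqr_sqrtr ?ler0n //; field; rewrite gt_eqF.
rewrite /Dt; have [sD|Ds] := leP s Delta; last first.
  exact: gauss_weight_le_peak.
apply: gauss_weight_antitone => //; first exact: lt_le_trans sD.
rewrite -[leLHS]peak; apply: ler_wpM2r; first exact: sqr_ge0.
by rewrite ler_pM2l // !expr2 ler_pM // ltW.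
Qed.

End GaussianWeight.

Lemma filtered_mean_excess (R : realType) (I : finType) (i0 : I)
    (w F e : I -> R) (G : R) :
  (forall l, 0 <= w l) -> \sum_l w l = 1 -> 0 < w i0 ->
  (forall l, 0 <= F l) -> F i0 = 1 -> 0 <= G ->
  (forall l, l != i0 -> (e l - e i0) * F l <= G) ->
  (\sum_l w l * F l * e l) / (\sum_l w l * F l) - e i0 <= (1 - w i0) / w i0 * G.
Proof.
move=> w0 w1 wi0 F0 Fi0 G0 excited.
set Den := \sum_l w l * F l.
have excited_weight : \sum_(l | l != i0) w l = 1 - w i0.
  by rewrite -w1 [in RHS](bigD1 i0) //= addrC addrK.
have Den_ge : w i0 <= Den.
  rewrite /Den (bigD1 i0) //= Fi0 mulr1 lerDl.
  by apply: sumr_ge0 => l _; rewrite mulr_ge0.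
have Den0 : 0 < Den by exact: lt_le_trans Den_ge.
have num_le : \sum_l w l * F l * e l - e i0 * Den <= (1 - w i0) * G.
  rewrite /Den mulr_sumr -sumrB (bigD1 i0) //= Fi0 mulr1 mulrC subrr add0r.
  rewrite -excited_weight mulr_suml; apply: ler_sum => l /excited excited_l.
  have -> : w l * F l * e l - e i0 * (w l * F l) = w l * ((e l - e i0) * F l) by ring.
  exact: ler_wpM2l.
have -> : (\sum_l w l * F l * e l) / Den - e i0
        = (\sum_l w l * F l * e l - e i0 * Den) / Den.
  by field; rewrite gt_eqF.
have excited0 : 0 <= 1 - w i0 by rewrite -excited_weight sumr_ge0.
rewrite ler_pdivrMr //.
have -> : (1 - w i0) / w i0 * G * Den = (1 - w i0) * G * (Den / w i0).
  by field; rewrite gt_eqF.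
rewrite (le_trans num_le) // -[leLHS]mulr1 ler_wpM2l ?mulr_ge0 //.
by rewrite ler_pdivlMr // mul1r.
Qed.

Theorem lemma1 (R : realType) (n : nat) (H : 'M[R[i]]_(2 ^ n))
  (E : 'I_(2 ^ n) -> R) (phi : 'I_(2 ^ n) -> 'cV[R[i]]_(2 ^ n))
  (i1 i2 : 'I_(2 ^ n)) (Psi0 : 'cV[R[i]]_(2 ^ n)) (tau : R) :
  hermitian_mx H ->
  (forall l m : 'I_(2 ^ n), (l <= m)%N -> E l <= E m) ->
  orthonormal_basis phi ->
  (forall l : 'I_(2 ^ n), H *m phi l = (E l)%:C *: phi l) ->
  val i1 = 0%N -> val i2 = 1%N ->
  cdot Psi0 Psi0 = 1 ->
  let Eg := E i1 in
  let Psig := phi i1 in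
  let Delta := E i2 - E i1 in
  let pg := cabs2 (cdot Psig Psi0) in
  0 < pg ->
  0 < tau ->
  let chi := gauss_filter E phi Eg tau *m Psi0 in
  let Etau := cdot chi (H *m chi) / cdot chi chi in
  let Dt := Num.max Delta (Num.sqrt 2 * tau)^-1 in
  Etau - Eg%:C <= ((1 - pg) / pg * expR (- (Dt ^+ 2 * tau ^+ 2)) * Dt)%:C.
Proof.
move=> _ mono onb eigen i1_0 i2_1 norm1 Eg Psig Delta pg pg0 tau0; cbv zeta.
set Dt := Num.max _ _.
set f := fun x => expR (- (1/2) * (x - Eg) ^+ 2 * tau ^+ 2).
have fE l : f (E l) ^+ 2 = expR (- ((E l - Eg) ^+ 2 * tau ^+ 2)).
  by rewrite /f -expRM_natl; congr expR; field.
have Dt0 : 0 < Dt by rewrite lt_max invr_gt0 mulr_gt0 ?sqrtr_gt0 ?orbT.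
have excited_gap l : l != i1 -> Delta <= E l - Eg.
  move=> l_i1; rewrite lerD2r mono // i2_1 lt0n.
  by apply: contra l_i1 => /eqP l0; apply/eqP/val_inj; rewrite /= l0 i1_0.
rewrite /gauss_filter spectral_fun_energy // spectral_fun_norm2 //.
rewrite -fmorph_div -rmorphB lecR -mulrA.
apply: (@filtered_mean_excess R _ i1 (fun l => cabs2 (cdot (phi l) Psi0))
          (fun l => f (E l) ^+ 2) E) => //.
- by move=> l; exact: cabs2_ge0.
- by apply: complexI; rewrite -cdot_parseval.
- by move=> l; exact: sqr_ge0.
- by rewrite fE subrr expr0n /= mul0r oppr0 expR0.
- by rewrite mulr_ge0 ?expR_ge0 ?ltW.
- move=> l /excited_gap gap; rewrite fE [leRHS]mulrC.
  exact: gauss_weight_le_max.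
Qed.
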